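(* Let $\mathcal{P}$ and $\mathcal{N}$ be disjoint sets of functions $[n]\to[r]$. Let $A,B$ be sets with maps $A\ni a\mapsto f_a\in\mathcal{P}$ and $B\ni b\mapsto g_b\in\mathcal{N}$, and let $\mu,\nu$ be probability measures supported on $A$ and $B$ respectively. Let $C_1,C_2>0$ be constants. Suppose that for every deterministic decision tree $\mathcal{T}$ of depth $q$ there is a partial map $\eta\colon B\to A$ such that (1) $\mathcal{T}(f_{\eta(b)})=\mathcal{T}(g_b)$ for every $b$ in the domain of $\eta$; (2) $\mu(\eta(B))\ge C_1$; (3) $\nu(\eta^{-1}(a))\ge C_2\,\mu(a)$ for every $a\in\eta(B)$. Then every randomized query algorithm that distinguishes $\mathcal{P}$ from $\mathcal{N}$ (accepting every $f\in\mathcal{P}$ and rejecting every $g\in\mathcal{N}$ with probability at least $2/3$) makes $\Omega(q)$ queries, where the implied constant depends only on $C_1,C_2$.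
   Context: $[m]=\{0,\dots,m-1\}$. A deterministic decision tree queries values of the input function adaptively; $\mathcal{T}(f)$ denotes the leaf at which the tree $\mathcal{T}$ terminates on input $f$. *)

From HB Require Import structures.
From mathcomp Require Import all_boot all_order all_algebra.
From mathcomp Require Import reals.
Set Implicit Arguments. Unset Strict Implicit. Unset Printing Implicit Defensive.
Import Order.TTheory GRing.Theory Num.Theory.

Notation input n r := {ffun 'I_n -> 'I_r}.

(* Deterministic decision trees querying values of an input [n] -> [r];
   leaves carry the output bit (accept = true). *)
Inductive dtree (n r : nat) : Type :=
| Leaf of bool
| Node of 'I_n & ('I_r -> dtree n r).
Arguments Leaf {n r}.
Arguments Node {n r}.

Fixpoint dt_out n r (t : dtree n r) (x : input n r) : bool :=
  match t with
  | Leaf b => b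
  | Node i k => dt_out (k (x i)) x
  end.

(* The leaf T(x) at which the tree terminates on x, identified by the
   root-to-leaf path (sequence of queried positions and answers). *)
Fixpoint dt_leaf n r (t : dtree n r) (x : input n r) : seq ('I_n * 'I_r) :=
  match t with
  | Leaf _ => [::]
  | Node i k => (i, x i) :: dt_leaf (k (x i)) x
  end.

Fixpoint depth_le n r (t : dtree n r) (d : nat) : Prop :=
  match t, d with
  | Leaf _, _ => True
  | Node _ _, 0 => False
  | Node _ k, d'.+1 => forall j, depth_le (k j) d'
  end.

Local Open Scope ring_scope.

Definition is_prob (R : realType) (T : finType) (p : T -> R) : Prop :=
  (forall t, 0 <= p t) /\ \sum_(t : T) p t = 1.

(* A randomized query algorithm: a probability distribution p over a finite
   family of deterministic decision trees T. *)
Definition accept_prob (R : realType) n r (I : finType) (p : I -> R)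
  (T : I -> dtree n r) (x : input n r) : R :=
  \sum_(i : I) p i * (dt_out (T i) x)%:R.

From mathcomp Require Import all_boot all_order all_algebra.
From mathcomp Require Import reals.
From mathcomp Require Import ring lra zify.
Import Order.TTheory GRing.Theory Num.Theory.
Set Implicit Arguments. Unset Strict Implicit. Unset Printing Implicit Defensive.

(* Run the algorithm 2m times independently and accept on a strict majority:
   a moment bound shows that the error drops to (8/9)^m while the depth grows
   only to 2md. On the other hand, the partial map eta makes every deterministic
   tree of depth q err a lot: if it accepts f_a with a in eta(B), it also accepts
   every g_b in the fibre eta^-1(a), whose nu-mass is at least C2 mu(a); hence
   nu(accepted) + C2 mu(rejected) >= C1 C2, and averaging over the amplified
   algorithm gives C1 C2 <= (1 + C2) (8/9)^m. This fails once m is large in terms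
   of C1 and C2 alone, so q < 2md. *)

Section DecisionTrees.
Variables n r : nat.
Implicit Types (t : dtree n r) (x y : input n r).

Lemma dt_out_leaf t x y : dt_leaf t x = dt_leaf t y -> dt_out t x = dt_out t y.
Proof. by elim: t => [b|i k IH] //= [exy]; rewrite exy; apply: IH. Qed.

Lemma depth_le_leq t d d' : (d <= d')%N -> depth_le t d -> depth_le t d'.
Proof. by elim: t d d' => [b|i k IH] [|d] [|d'] //= le_dd' kd j; apply: IH (kd j). Qed.

Fixpoint dt_bind t (k : bool -> dtree n r) : dtree n r :=
  match t with
  | Leaf b => k b
  | Node i c => Node i (fun j => dt_bind (c j) k)
  end.

Lemma dt_out_bind t k x : dt_out (dt_bind t k) x = dt_out (k (dt_out t x)) x.
Proof. by elim: t => //= i c IH. Qed.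

Lemma depth_le_bind t k d1 d2 :
  depth_le t d1 -> (forall b, depth_le (k b) d2) -> depth_le (dt_bind t k) (d1 + d2).
Proof.
elim: t d1 => [b|i c IH] [|d1] //= td1 kd2;
  try exact: depth_le_leq (leq_addl _ _) (kd2 b).
by move=> j; apply: IH.
Qed.

Section RunAll.
Variables (J : Type) (h : J -> dtree n r).

Fixpoint dt_all (s : seq J) (k : seq bool -> bool) : dtree n r :=
  if s is j :: s' then dt_bind (h j) (fun b => dt_all s' (fun bs => k (b :: bs)))
  else Leaf (k [::]).

Lemma dt_out_all s k x : dt_out (dt_all s k) x = k [seq dt_out (h j) x | j <- s].
Proof. by elim: s k => //= j s IH k; rewrite dt_out_bind IH. Qed.

Lemma depth_le_all s k d :
  (forall j, depth_le (h j) d) -> depth_le (dt_all s k) (size s * d).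
Proof. by move=> hd; elim: s k => //= j s IH k; rewrite mulSn; apply: depth_le_bind. Qed.

End RunAll.
End DecisionTrees.

Local Open Scope ring_scope.

Section Probability.
Variable R : realType.

Lemma sum_ffun_prod (I : finType) (h : I -> R) k :
  \sum_(F : {ffun 'I_k -> I}) \prod_j h (F j) = (\sum_i h i) ^+ k.
Proof. by rewrite -(bigA_distr_bigA (fun (j : 'I_k) i => h i)) prodr_const card_ord. Qed.

Definition pprod (I : finType) (p : I -> R) {k} (F : {ffun 'I_k -> I}) : R :=
  \prod_j p (F j).

Lemma is_prob_pprod (I : finType) (p : I -> R) k : is_prob p -> is_prob (@pprod I p k).
Proof.
move=> [p0 p1]; split=> [F|]; first exact: prodr_ge0.
by rewrite sum_ffun_prod p1 expr1n.
Qed.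

Lemma accept_probC n r (I : finType) (p : I -> R) (T : I -> dtree n r) x :
  is_prob p -> 1 - accept_prob p T x = \sum_i p i * (~~ dt_out (T i) x)%:R.
Proof.
move=> [_ p1]; rewrite /accept_prob -{1}p1 -sumrB; apply: eq_bigr => i _.
by case: dt_out => /=; rewrite ?mulr1 ?mulr0 ?subrr ?subr0.
Qed.

Lemma majority_tail (I : finType) (p : I -> R) (b : pred I) m :
  is_prob p -> 2%:R / 3%:R <= \sum_i p i * (b i)%:R ->
  \sum_(F : {ffun 'I_(m.*2) -> I}) pprod p F * (count b (codom F) <= m)%N%:R
    <= (8%:R / 9%:R) ^+ m.
Proof.
move=> [p0 p1] pb_ge.
pose w i : R := if b i then 2%:R^-1 else 1.
(* Markov's inequality for 2^-hits. *)
have few_hits (F : {ffun 'I_(m.*2) -> I}) :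
    ((count b (codom F) <= m)%N%:R : R) <= 2%:R ^+ m * \prod_j w (F j).
  have -> : \prod_j w (F j) = 2%:R^-1 ^+ count b (codom F).
    by rewrite -iter_mulr_1 -big_const_seq [RHS]big_mkcond (codomE F) big_map big_enum.
  case: leqP => hit_le; last by rewrite mulr_ge0 // exprn_ge0 // invr_ge0.
  rewrite -[X in 2%:R ^+ X](subnK hit_le) exprD -mulrA -exprMn.
  rewrite mulfV ?pnatr_eq0 // expr1n mulr1.
  by rewrite exprn_ege1 // ler1n.
apply: le_trans (_ : \sum_F pprod p F * (2%:R ^+ m * \prod_j w (F j)) <= _).
  by apply: ler_sum => F _; apply: ler_wpM2l; [apply: prodr_ge0 | apply: few_hits].
under eq_bigr do rewrite mulrCA -big_split /=.
rewrite -mulr_sumr (sum_ffun_prod (fun i => p i * w i)).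
have -> : \sum_i p i * w i = 1 - (\sum_i p i * (b i)%:R) / 2%:R.
  rewrite mulr_suml -{1}p1 -sumrB; apply: eq_bigr => i _.
  by rewrite /w; case: (b i) => /=; field.
set a := \sum_i p i * (b i)%:R in pb_ge *.
have a_le1 : a <= 1.
  by rewrite -p1; apply: ler_sum => i _; case: (b i); rewrite /= ?mulr1 ?mulr0.
rewrite -mul2n exprM -exprMn; apply: lerXn2r; rewrite ?nnegrE.
- by apply: mulr_ge0 => //; rewrite exprn_ge0 //; lra.
- lra.
- have h : 0 <= (a - 2%:R / 3%:R) * (5%:R / 3%:R - a / 2%:R) by apply: mulr_ge0; lra.
  rewrite expr2; nra.
Qed.

End Probability.

Section Amplification.
Variables (R : realType) (n r : nat) (I : finType) (p : I -> R) (T : I -> dtree n r).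
Variable m : nat.
Hypothesis p_prob : is_prob p.

Definition amplify (F : {ffun 'I_(m.*2) -> I}) : dtree n r :=
  dt_all T (codom F) (fun bs => (m < count id bs)%N).

Lemma dt_out_amplify F x :
  dt_out (amplify F) x = (m < count (fun i => dt_out (T i) x) (codom F))%N.
Proof. by rewrite dt_out_all count_map. Qed.

Lemma depth_le_amplify d F :
  (forall i, depth_le (T i) d) -> depth_le (amplify F) (m.*2 * d).
Proof.
by move=> Td; have := depth_le_all (codom F) (fun bs => (m < count id bs)%N) Td;
  rewrite size_codom card_ord.
Qed.

Lemma amplify_accept x : 2%:R / 3%:R <= accept_prob p T x ->
  1 - accept_prob (pprod p) amplify x <= (8%:R / 9%:R) ^+ m.
Proof.
rewrite accept_probC; last exact: is_prob_pprod.
move=> acc_x.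
by under eq_bigr do rewrite dt_out_amplify -leqNgt; apply: majority_tail.
Qed.

Lemma amplify_reject x : 2%:R / 3%:R <= 1 - accept_prob p T x ->
  accept_prob (pprod p) amplify x <= (8%:R / 9%:R) ^+ m.
Proof.
rewrite accept_probC // => rej_x.
apply: le_trans (majority_tail m p_prob rej_x); apply: ler_sum => F _.
apply: ler_wpM2l; first by apply: prodr_ge0 => j _; case: p_prob.
rewrite dt_out_amplify ler_nat.
set hits := count (fun i => dt_out (T i) x) (codom F).
set misses := count (fun i => ~~ dt_out (T i) x) (codom F).
have : (hits + misses)%N = m.*2 by rewrite count_predC size_codom card_ord.
by case: ltnP => //= hits_gt split_hits; rewrite lt0b; lia.
Qed.

End Amplification.

Section Coupling.
Variables (R : realType) (A B : finType) (mu : A -> R) (nu : B -> R) (C1 C2 : R).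
Hypotheses (mu_ge0 : forall a, 0 <= mu a) (nu_ge0 : forall b, 0 <= nu b).
Hypothesis C2_ge0 : 0 <= C2.

Lemma sum_fibres_le (eta : B -> option A) (F : B -> R) : (forall b, 0 <= F b) ->
  \sum_a \sum_(b | eta b == Some a) F b <= \sum_b F b.
Proof.
move=> F_ge0; under eq_bigr do rewrite big_mkcond /=.
rewrite exchange_big /=; apply: ler_sum => b _.
case: (eta b) => [a0|]; last by rewrite big1.
rewrite (bigD1 a0) //= eqxx big1 ?addr0 // => a a_ne; case: eqP => // [[a0a]].
by rewrite a0a eqxx in a_ne.
Qed.

Lemma coupled_error_ge (u : pred A) (v : pred B) (eta : B -> option A) :
  (forall b a, eta b = Some a -> v b = u a) ->
  C1 <= \sum_(a | [exists b, eta b == Some a]) mu a ->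
  (forall a, [exists b, eta b == Some a] ->
     C2 * mu a <= \sum_(b | eta b == Some a) nu b) ->
  C2 * C1 <= \sum_b nu b * (v b)%:R + C2 * \sum_a mu a * (~~ u a)%:R.
Proof.
move=> vu C1_le fibre_ge.
set S := fun a => [exists b, eta b == Some a].
have mu_split : \sum_(a | S a) mu a =
    \sum_(a | S a) mu a * (u a)%:R + \sum_(a | S a) mu a * (~~ u a)%:R.
  rewrite -big_split; apply: eq_bigr => a _.
  by case: (u a); rewrite /= mulr1 mulr0 ?addr0 ?add0r.
have accepted : C2 * \sum_(a | S a) mu a * (u a)%:R <= \sum_b nu b * (v b)%:R.
  apply: le_trans (sum_fibres_le eta _) => [|b]; last exact: mulr_ge0.
  rewrite mulr_sumr [leRHS](bigID S) /= ler_wpDr //.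
    by apply: sumr_ge0 => a _; apply: sumr_ge0 => b _; apply: mulr_ge0.
  apply: ler_sum => a Sa; rewrite mulrA.
  have -> : \sum_(b | eta b == Some a) nu b * (v b)%:R
           = (\sum_(b | eta b == Some a) nu b) * (u a)%:R.
    by rewrite mulr_suml; apply: eq_bigr => b /eqP/vu ->.
  by apply: ler_wpM2r => //; apply: fibre_ge.
have rejected : \sum_(a | S a) mu a * (~~ u a)%:R <= \sum_a mu a * (~~ u a)%:R.
  by rewrite [leRHS](bigID S) /= lerDl; apply: sumr_ge0 => a _; apply: mulr_ge0.
apply: le_trans (_ : C2 * (\sum_(a | S a) mu a) <= _); first exact: ler_wpM2l.
rewrite mu_split mulrDr lerD //; exact: ler_wpM2l.
Qed.

End Coupling.

Section YaoBound.
Variables (R : realType) (n r : nat) (A B : finType).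
Variables (f : A -> input n r) (g : B -> input n r) (mu : A -> R) (nu : B -> R).
Variables C1 C2 : R.
Hypotheses (mu_prob : is_prob mu) (nu_prob : is_prob nu) (C2_ge0 : 0 <= C2).

Definition leaf_coupling (T : dtree n r) : Prop :=
  exists eta : B -> option A,
    (forall b a, eta b = Some a -> dt_leaf T (f a) = dt_leaf T (g b)) /\
    \sum_(a | [exists b, eta b == Some a]) mu a >= C1 /\
    (forall a, [exists b, eta b == Some a] ->
       \sum_(b | eta b == Some a) nu b >= C2 * mu a).

Lemma leaf_coupling_error_ge T : leaf_coupling T ->
  C2 * C1 <= \sum_b nu b * (dt_out T (g b))%:R
             + C2 * \sum_a mu a * (~~ dt_out T (f a))%:R.
Proof.
case: mu_prob nu_prob => [mu_ge0 _] [nu_ge0 _] [eta [same_leaf [C1_le fibre_ge]]].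
apply: (coupled_error_ge mu_ge0 nu_ge0 C2_ge0 _ C1_le fibre_ge) => b a /same_leaf.
by move/dt_out_leaf.
Qed.

Lemma sum_prob_le (I : finType) (p : I -> R) (h : I -> R) eps :
  is_prob p -> (forall i, h i <= eps) -> \sum_i p i * h i <= eps.
Proof.
move=> [p_ge0 p1] h_le; apply: le_trans (_ : \sum_i p i * eps <= _).
  by apply: ler_sum => i _; apply: ler_wpM2l.
by rewrite -mulr_suml p1 mul1r.
Qed.

Lemma randomized_error_ge (I : finType) (p : I -> R) (T : I -> dtree n r) eps :
  is_prob p -> (forall i, leaf_coupling (T i)) ->
  (forall a, 1 - accept_prob p T (f a) <= eps) ->
  (forall b, accept_prob p T (g b) <= eps) ->
  C2 * C1 <= (1 + C2) * eps.
Proof.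
move=> p_prob coupled rej_le acc_le.
have swap (J : finType) (w : J -> R) (X : I -> J -> R) :
    \sum_i p i * \sum_j w j * X i j = \sum_j w j * \sum_i p i * X i j.
  under eq_bigr do rewrite mulr_sumr.
  rewrite exchange_big; apply: eq_bigr => j _; rewrite mulr_sumr.
  by apply: eq_bigr => i _; rewrite mulrCA.
case: (p_prob) => [p_ge0 p1].
apply: le_trans (_ : \sum_i p i * (\sum_b nu b * (dt_out (T i) (g b))%:R
    + C2 * \sum_a mu a * (~~ dt_out (T i) (f a))%:R) <= _).
  rewrite -[leLHS]mul1r -{1}p1 mulr_suml; apply: ler_sum => i _.
  by apply: ler_wpM2l => //; apply: leaf_coupling_error_ge.
under eq_bigr do rewrite mulrDr mulrCA.
rewrite big_split /= -mulr_sumr !swap mulrDl mul1r lerD //.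
  by apply: sum_prob_le.
apply: ler_wpM2l => //; apply: sum_prob_le => // a.
by rewrite -accept_probC.
Qed.

End YaoBound.

Lemma natD8_exp8_9_le8 (R : realType) m :
  (m%:R + 8%:R) * (8%:R / 9%:R : R) ^+ m <= 8%:R.
Proof.
elim: m => [|m IH]; first by rewrite expr0 mulr1 add0r.
rewrite exprS mulrCA; apply: le_trans IH; rewrite mulrA ler_wpM2r //.
  by apply: exprn_ge0; lra.
by have := ler0n R m; rewrite -natr1; lra.
Qed.

Lemma exists_exp8_9_lt (R : realType) (c : R) : 0 < c ->
  exists2 m : nat, (0 < m)%N & (8%:R / 9%:R) ^+ m < c.
Proof.
move=> c_gt0; set m := (Num.Def.archi_bound (8%:R / c)).+1.
have m_gt : 8%:R < m%:R * c.
  rewrite -ltr_pdivrMr //; apply: lt_le_trans (archi_boundP _) _.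
    by rewrite divr_ge0 // ltW.
  by rewrite ler_nat.
exists m => //.
have := natD8_exp8_9_le8 R m; have := ler0n R m.
set e := (8%:R / 9%:R : R) ^+ m; have : 0 <= e by apply: exprn_ge0; lra.
nra.
Qed.

Theorem lemma6p1 (R : realType) (C1 C2 : R) :
  0 < C1 -> 0 < C2 ->
  exists k : nat, (0 < k)%N /\
  forall (n r : nat) (P N : {set input n r}),
  [disjoint P & N] ->
  forall (A B : finType) (f : A -> input n r) (g : B -> input n r),
  (forall a, f a \in P) -> (forall b, g b \in N) ->
  forall (mu : A -> R) (nu : B -> R), is_prob mu -> is_prob nu ->
  forall q : nat,
  (forall T : dtree n r, depth_le T q ->
     exists eta : B -> option A,
       (forall b a, eta b = Some a -> dt_leaf T (f a) = dt_leaf T (g b)) /\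
       \sum_(a | [exists b, eta b == Some a]) mu a >= C1 /\
       (forall a, [exists b, eta b == Some a] ->
          \sum_(b | eta b == Some a) nu b >= C2 * mu a)) ->
  forall (I : finType) (p : I -> R) (T : I -> dtree n r) (d : nat),
  is_prob p ->
  (forall i, depth_le (T i) d) ->
  (forall x, x \in P -> accept_prob p T x >= 2%:R / 3%:R) ->
  (forall x, x \in N -> 1 - accept_prob p T x >= 2%:R / 3%:R) ->
  (q <= k * d)%N.
Proof.
move=> C1_gt0 C2_gt0.
have [m m_gt0 small] :
    exists2 m : nat, (0 < m)%N & (8%:R / 9%:R) ^+ m < C2 * C1 / (1 + C2).
  by apply: exists_exp8_9_lt; apply: divr_gt0; [apply: mulr_gt0 | lra].
exists m.*2; split; first by rewrite double_gt0.
move=> n r P N _ A B f g fP gN mu nu mu_prob nu_prob q coupled I p T d p_prob Td accP rejN.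
rewrite leqNgt; apply/negP => /ltnW q_ge.
have amplify_coupled (F : {ffun 'I_(m.*2) -> I}) :
    leaf_coupling f g mu nu C1 C2 (amplify T F).
  by apply: coupled; apply: depth_le_leq q_ge _; apply: depth_le_amplify.
have := randomized_error_ge mu_prob nu_prob (ltW C2_gt0) (is_prob_pprod _ p_prob)
  amplify_coupled (fun a => amplify_accept m p_prob (accP _ (fP a)))
  (fun b => amplify_reject m p_prob (rejN _ (gN b))).
by move: small; rewrite ltr_pdivlMr; [nra | lra].
Qed.
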